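(* In the setting described in the context, for every $i$ with $1\le i\le m-1$, the bounding triangle $T_i$ contains no point of $P$ in its interior.
   Context: $P$ is a finite set of points in the plane, $s,t\in P$ distinct, and coordinates are chosen so that $t=(0,0)$ and $s$ lies in $C_2^t$ below the line $\ell_t^-=\{x+y=0\}$. Cones: $C_0^v=\{x\ge v_x,y\le v_y\}$, $C_1^v=\{x\ge v_x,y\ge v_y\}$, $C_2^v=\{x\le v_x,y\ge v_y\}$, $C_3^v=\{x\le v_x,y\le v_y\}$ with bisector directions $(1,-1),(1,1),(-1,1),(-1,-1)$. The $\Theta_4$-graph of $P$ has, for each $v\in P$ and cone $C_i^v$ containing a point of $P\setminus\{v\}$, a directed edge from $v$ to a point $w$ of $(P\setminus\{v\})\cap C_i^v$ minimizing the projection of $w-v$ onto the bisector direction (the neighbour of $v$ in $C_i^v$). For a point $p$, $\ell_p^-$ and $\ell_p^+$ are the lines through $p$ of slope $-1$ and $+1$. Algorithm: for a vertex $v$, let $T(v,\ell_t^-)=C_1^v\cap\{x+y\le0\}$ if $v_x+v_y<0$, $T(v,\ell_t^-)=C_3^v\cap\{x+y\ge0\}$ if $v_x+v_y>0$, and $\{v\}$ if $v_x+v_y=0$; $v$ is clean if $T(v,\ell_t^-)$ contains no point of $P$ other than $v$. Starting at $v=s$, while $v\ne t$: if $v$ is not clean, take a sweeping step (go to the neighbour of $v$ in $C_1^v$, resp. $C_3^v$, which lies in $T(v,\ell_t^-)$); otherwise take a greedy step (go to the neighbour of $v$ in the cone $C_i^v$ containing $t$). Let $(p_1,q_1),\dots,(p_{m-1},q_{m-1})$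 be, in order, the edges traversed by greedy steps, and set $p_m=t$. Quadrants of $t$: Northern $=\{y\ge|x|\}$, Southern $=\{y\le-|x|\}$, Western $=\{x\le-|y|\}$, Eastern $=\{x\ge|y|\}$. Bounding triangle: if $p_i$ is in the Northern or Southern quadrant let $\mathcal{L}$ be the horizontal line through $p_i$, otherwise the vertical line through $p_i$; $T_i$ is the triangle formed by the lines $\ell_t^-$, $\mathcal{L}$ and $\ell_{q_i}^+$. *)

From mathcomp Require Import all_boot all_order all_algebra.
Set Implicit Arguments. Unset Strict Implicit. Unset Printing Implicit Defensive.
Import Order.TTheory GRing.Theory Num.Theory.
Local Open Scope ring_scope.

Section Theta4.
Variable R : realFieldType.
Notation pt := (R * R)%type.

(* the origin, i.e. the target t *)
Definition origin : pt := (0, 0).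

Definition cone (i : nat) (v w : pt) : bool :=
  match i with
  | 0%N => (v.1 <= w.1) && (w.2 <= v.2)
  | 1%N => (v.1 <= w.1) && (v.2 <= w.2)
  | 2%N => (w.1 <= v.1) && (v.2 <= w.2)
  | _ => (w.1 <= v.1) && (w.2 <= v.2)
  end.

Definition bis (i : nat) : pt :=
  match i with
  | 0%N => (1, -1)
  | 1%N => (1, 1)
  | 2%N => (-1, 1)
  | _ => (-1, -1)
  end.

Definition proj (i : nat) (v w : pt) : R :=
  (w.1 - v.1) * (bis i).1 + (w.2 - v.2) * (bis i).2.

(* nb v i is the neighbour of v in cone C_i^v in the Theta_4-graph of P
   (for any tie-breaking): whenever C_i^v contains a point of P \ {v},
   nb v i is such a point minimising the projection onto the bisector. *)
Definition theta4_nb (P : seq pt) (nb : pt -> nat -> pt) : Prop :=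
  forall v i, v \in P -> (i < 4)%N ->
    (exists w, [/\ w \in P, w != v & cone i v w]) ->
    [/\ nb v i \in P, nb v i != v, cone i v (nb v i) &
        forall w, w \in P -> w != v -> cone i v w ->
          proj i v (nb v i) <= proj i v w].

Definition Treg (v w : pt) : bool :=
  if v.1 + v.2 < 0 then cone 1 v w && (w.1 + w.2 <= 0)
  else if 0 < v.1 + v.2 then cone 3 v w && (0 <= w.1 + w.2)
  else w == v.

Definition clean (P : seq pt) (v : pt) : Prop :=
  forall w, w \in P -> Treg v w -> w = v.

(* one step of the routing algorithm from v to v' (v <> t) *)
Definition route_step (P : seq pt) (nb : pt -> nat -> pt) (v v' : pt) : Prop :=
  (clean P v /\
    (* greedy step: neighbour in a cone C_i^v containing t *)
    exists i, [/\ (i < 4)%N, cone i v origin & v' = nb v i])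
  \/
  (~ clean P v /\
    (* sweeping step *)
    v' = nb v (if v.1 + v.2 < 0 then 1%N else 3%N)).

Definition orient (a b z : pt) : R :=
  (b.1 - a.1) * (z.2 - a.2) - (b.2 - a.2) * (z.1 - a.1).

(* z lies in the (topological) interior of the triangle abc;
   empty when abc is degenerate *)
Definition in_open_triangle (a b c z : pt) : bool :=
  let o := orient a b c in
  [&& o != 0, 0 < orient a b z * o, 0 < orient b c z * o & 0 < orient c a z * o].

(* interior of the bounding triangle T_i for the greedy edge (p, q):
   the triangle formed by l_t^- : x + y = 0, the line L through p
   (horizontal if p is in the Northern/Southern quadrant, i.e. |p.1| <= |p.2|,
   vertical otherwise) and l_q^+ : y - x = q.2 - q.1.  Its vertices are the
   pairwise intersections of these three lines. *)
Definition in_bounding_triangle (p q z : pt) : bool :=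
  let c := q.2 - q.1 in
  let A : pt := (- (c / 2), c / 2) in
  if `|p.1| <= `|p.2| then
    in_open_triangle A (- p.2, p.2) (p.2 - c, p.2) z
  else
    in_open_triangle A (p.1, - p.1) (p.1, p.1 + c) z.

End Theta4.

From mathcomp Require Import all_boot all_order all_algebra.
From mathcomp Require Import ring lra.
Import Order.TTheory GRing.Theory Num.Theory.
Local Open Scope ring_scope.

(* A greedy edge (p, q) leaves a clean vertex p != t through the cone C_i^p
   containing t.  Cleanness rules out i = 1, 3 (t itself would lie in
   T(p, l_t^-)), and the point reflection through t, which swaps C_0 and C_2
   and preserves T(v, l_t^-) and the bounding triangles, reduces i = 2 to i = 0.
   For i = 0, the open triangle T_i lies strictly beyond l_q^+ as seen from p:
   its points in C_0^p would be strictly closer to p than q along the bisector,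
   and all its other points lie in T(p, l_t^-), contradicting cleanness. *)

Section BoundingTriangle.
Context {R : realFieldType}.
Implicit Types (a b c : R) (p q v w z : R * R).

Lemma mulr_sqr_half_gt0 (d x : R) : d != 0 -> (0 < x * (d ^+ 2 / 2)) = (0 < x).
Proof. by move=> d_neq0; rewrite pmulr_lgt0 // divr_gt0 // exprn_even_gt0. Qed.

Lemma half_gt0 (x : R) : (0 < x / 2) = (0 < x).
Proof. by rewrite pmulr_lgt0 // invr_gt0. Qed.

Lemma in_vertical_triangle a c z :
  in_open_triangle (- (c / 2), c / 2) (a, - a) (a, a + c) z ->
  [/\ 0 < (2 * a + c) * (z.1 + z.2), 0 < (2 * a + c) * (a - z.1)
    & 0 < (2 * a + c) * (c - (z.2 - z.1))].
Proof.
set d := 2 * a + c; rewrite /in_open_triangle.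
have -> : orient (- (c / 2), c / 2) (a, - a) (a, a + c) = d ^+ 2 / 2.
  by rewrite /orient /d /=; field.
have -> : orient (- (c / 2), c / 2) (a, - a) z = d * (z.1 + z.2) / 2.
  by rewrite /orient /d /=; field.
have -> : orient (a, - a) (a, a + c) z = d * (a - z.1).
  by rewrite /orient /d /=; field.
have -> : orient (a, a + c) (- (c / 2), c / 2) z = d * (c - (z.2 - z.1)) / 2.
  by rewrite /orient /d /=; field.
move=> /and4P [o_neq0]; have d_neq0 : d != 0.
  by apply: contraNneq o_neq0 => ->; rewrite expr0n mul0r.
by rewrite !mulr_sqr_half_gt0 // !half_gt0.
Qed.

Lemma in_horizontal_triangle b c z :
  in_open_triangle (- (c / 2), c / 2) (- b, b) (b - c, b) z ->
  [/\ 0 < (2 * b - c) * (z.1 + z.2), 0 < (2 * b - c) * (b - z.2)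
    & 0 < (2 * b - c) * (z.2 - z.1 - c)].
Proof.
set d := 2 * b - c; rewrite /in_open_triangle.
have -> : orient (- (c / 2), c / 2) (- b, b) (b - c, b) = - (d ^+ 2 / 2).
  by rewrite /orient /d /=; field.
have -> : orient (- (c / 2), c / 2) (- b, b) z = - (d * (z.1 + z.2) / 2).
  by rewrite /orient /d /=; field.
have -> : orient (- b, b) (b - c, b) z = - (d * (b - z.2)).
  by rewrite /orient /d /=; field.
have -> : orient (b - c, b) (- (c / 2), c / 2) z = - (d * (z.2 - z.1 - c) / 2).
  by rewrite /orient /d /=; field.
move=> /and4P [o_neq0]; have d_neq0 : d != 0.
  by apply: contraNneq o_neq0 => ->; rewrite expr0n mul0r oppr0.
by rewrite !mulrNN !mulr_sqr_half_gt0 // !half_gt0.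
Qed.

Lemma orient_opp (u1 u2 u3 : R * R) : orient (- u1) (- u2) (- u3) = orient u1 u2 u3.
Proof. by rewrite /orient /=; ring. Qed.

Lemma in_open_triangle_opp (u1 u2 u3 : R * R) z :
  in_open_triangle (- u1) (- u2) (- u3) (- z) = in_open_triangle u1 u2 u3 z.
Proof. by rewrite /in_open_triangle !orient_opp. Qed.

Lemma in_bounding_triangle_opp p q z :
  in_bounding_triangle (- p) (- q) (- z) = in_bounding_triangle p q z.
Proof.
rewrite /in_bounding_triangle /= !normrN.
by case: ifP => _; rewrite -[in RHS]in_open_triangle_opp;
  congr in_open_triangle; congr (_, _); rewrite /=; field.
Qed.

Lemma cone0_opp v w : cone 0 (- v) (- w) = cone 2 v w.
Proof. by rewrite /cone /= !lerN2 andbC. Qed.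

Lemma proj0_opp v w : proj 0 (- v) (- w) = proj 2 v w.
Proof. by rewrite /proj /=; ring. Qed.

Lemma Treg_opp v w : Treg (- v) (- w) = Treg v w.
Proof.
rewrite /Treg /cone /= -!opprD !oppr_lt0 !oppr_gt0 !oppr_le0 !oppr_ge0 !lerN2.
by case: ltrgtP => //= _; rewrite eqr_opp.
Qed.

Lemma in_bounding_triangle_neq {p q z} : in_bounding_triangle p q z -> p != z.
Proof.
apply: contraTneq => <-; rewrite /in_bounding_triangle.
(* [p] lies on the side [L] of the triangle. *)
by case: ifP => _; apply/negP; [move/in_horizontal_triangle | move/in_vertical_triangle];
  case=> _; rewrite subrr mulr0 ltxx.
Qed.

Lemma Treg_below p w : p.1 + p.2 < 0 ->
  Treg p w = [&& p.1 <= w.1, p.2 <= w.2 & w.1 + w.2 <= 0].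
Proof. by move=> p_neg; rewrite /Treg p_neg /cone andbA. Qed.

Lemma Treg_above p w : 0 < p.1 + p.2 ->
  Treg p w = [&& w.1 <= p.1, w.2 <= p.2 & 0 <= w.1 + w.2].
Proof. by move=> p_pos; rewrite /Treg p_pos (lt_gtF p_pos) /cone andbA. Qed.

Lemma bounding_triangle_cone0 p q z :
  cone 0 p (origin R) -> cone 0 p q -> in_bounding_triangle p q z ->
  Treg p z \/ cone 0 p z /\ proj 0 p z < proj 0 p q.
Proof.
case: p q z => [a b] [q1 q2] [z1 z2]; rewrite /cone /proj /in_bounding_triangle /=.
move=> /andP [a_le0 b_ge0] /andP [a_le_q1 q2_le_b].
rewrite (ler0_norm a_le0) (ger0_norm b_ge0); case: ifP => [hor | /negbT ver].
- move/in_horizontal_triangle => /= [h1 h2 h3].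
  have [s_gt0 z2_lt_b beyond_q] : [/\ 0 < z1 + z2, z2 < b & q2 - q1 < z2 - z1].
    by split; nra.
  by case: (lerP z1 a) => z1_a; [left; rewrite Treg_above /=; lra | right; lra].
- move/in_vertical_triangle => /= [h1 h2 h3].
  have [s_lt0 a_lt_z1 beyond_q] : [/\ z1 + z2 < 0, a < z1 & q2 - q1 < z2 - z1].
    by split; nra.
  by case: (lerP b z2) => z2_b; [left; rewrite Treg_below /=; lra | right; lra].
Qed.

Lemma bounding_triangle_cone2 p q z :
  cone 2 p (origin R) -> cone 2 p q -> in_bounding_triangle p q z ->
  Treg p z \/ cone 2 p z /\ proj 2 p z < proj 2 p q.
Proof.
have opp_origin : - origin R = origin R := oppr0 _.
rewrite -!cone0_opp -!proj0_opp -Treg_opp -in_bounding_triangle_opp opp_origin.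
exact: bounding_triangle_cone0.
Qed.

Lemma Treg_origin {p} : p != origin R ->
  cone 1 p (origin R) || cone 3 p (origin R) -> Treg p (origin R).
Proof.
case: p => a b; rewrite xpair_eqE negb_and /cone /= => ab_neq0.
case/orP=> /andP [a_sgn b_sgn].
- have ab_lt0 : a + b < 0 by rewrite lt_neqAle naddr_eq0 // negb_and ab_neq0 /=; lra.
  by rewrite Treg_below //=; lra.
- have ab_gt0 : 0 < a + b by rewrite lt0r paddr_eq0 // negb_and ab_neq0 /=; lra.
  by rewrite Treg_above //=; lra.
Qed.

Lemma Treg_cone {p w} : Treg p w -> p != w ->
  cone (if p.1 + p.2 < 0 then 1 else 3) p w.
Proof.
by rewrite /Treg; case: ifP => _; [case/andP | case: ifP => [_ /andP[] | _ /eqP ->]];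
  rewrite ?eqxx.
Qed.

End BoundingTriangle.

Section Routing.
Context {R : realFieldType} {P : seq (R * R)} {nb : R * R -> nat -> R * R}.
Hypotheses (origin_in : origin R \in P) (nbP : theta4_nb P nb).

Lemma theta4_nbP {v i w} : v \in P -> (i < 4)%N -> w \in P -> v != w -> cone i v w ->
  [/\ nb v i \in P, cone i v (nb v i) & proj i v (nb v i) <= proj i v w].
Proof.
move=> vP i_lt4 wP v_neq_w w_cone.
have [|nb_in _ nb_cone nb_min] := nbP _ _ vP i_lt4; first by exists w; rewrite eq_sym.
by split; last by apply: nb_min; rewrite // eq_sym.
Qed.

Lemma clean_origin_cone {p} : p != origin R -> clean P p ->
  ~~ (cone 1 p (origin R) || cone 3 p (origin R)).
Proof.
move=> p_neq0 p_clean; apply: contra (p_neq0).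
by move=> /(Treg_origin p_neq0) /(p_clean _ origin_in) <-.
Qed.

Lemma not_clean_witness p : ~ clean P p -> exists2 w, w \in P & Treg p w && (p != w).
Proof.
move=> p_dirty; apply/hasP; apply/negPn/negP => /hasPn none.
by apply: p_dirty => w wP wT; apply/eqP; move: (none w wP); rewrite wT negbK eq_sym.
Qed.

Lemma route_step_mem p p' : p \in P -> p != origin R -> route_step P nb p p' -> p' \in P.
Proof.
move=> pP p_neq0 [[_ [i [i_lt4 i_t ->]]] | [/not_clean_witness [w wP /andP [wT p_neq_w]] ->]].
  by have [] := theta4_nbP pP i_lt4 origin_in p_neq0 i_t.
have i_lt4 : ((if (p.1 + p.2 < 0)%R then 1 else 3) < 4)%N by case: ifP.
by have [] := theta4_nbP pP i_lt4 wP p_neq_w (Treg_cone wT p_neq_w).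
Qed.

Lemma greedy_bounding_triangle_empty {p i z} :
  p \in P -> p != origin R -> clean P p -> (i < 4)%N -> cone i p (origin R) ->
  z \in P -> ~~ in_bounding_triangle p (nb p i) z.
Proof.
move=> pP p_neq0 p_clean i_lt4 i_t zP; apply/negP => zT.
have p_neq_z := in_bounding_triangle_neq zT.
have [_ q_cone _] := theta4_nbP pP i_lt4 origin_in p_neq0 i_t.
have : Treg p z \/ cone i p z /\ proj i p z < proj i p (nb p i).
  move: i_lt4 i_t q_cone zT; case: i => [|[|[|[|//]]]] _ i_t.
  - exact: bounding_triangle_cone0.
  - by case/norP: (clean_origin_cone p_neq0 p_clean); rewrite i_t.
  - exact: bounding_triangle_cone2.
  - by case/norP: (clean_origin_cone p_neq0 p_clean); rewrite i_t.
case=> [/(p_clean _ zP) z_eq_p | [z_cone z_closer]]; first by rewrite z_eq_p eqxx in p_neq_z.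
by have [_ _] := theta4_nbP pP i_lt4 zP p_neq_z z_cone; rewrite leNgt z_closer.
Qed.

Lemma route_mem {v : nat -> R * R} : v 0%N \in P ->
  (forall k, (forall j, (j <= k)%N -> v j != origin R) -> route_step P nb (v k) (v k.+1)) ->
  forall k, (forall j, (j <= k)%N -> v j != origin R) -> v k \in P.
Proof.
move=> v0P step; elim=> [|k IH] v_neq0 //.
have v_neq0' j : (j <= k)%N -> v j != origin R.
  by move=> j_le_k; apply: v_neq0; rewrite (leq_trans j_le_k).
exact: route_step_mem (IH v_neq0') (v_neq0' k (leqnn k)) (step k v_neq0').
Qed.

End Routing.

Theorem lemma2 (R : realFieldType) (P : seq (R * R)) (s : R * R)
    (nb : R * R -> nat -> R * R) (v : nat -> R * R) :
  origin R \in P -> s \in P -> s != origin R ->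
  s.1 <= 0 -> 0 <= s.2 -> s.1 + s.2 < 0 ->
  theta4_nb P nb ->
  v 0%N = s ->
  (forall k, (forall j, (j <= k)%N -> v j != origin R) ->
     route_step P nb (v k) (v k.+1)) ->
  forall k, (forall j, (j <= k)%N -> v j != origin R) ->
    clean P (v k) ->
    forall z, z \in P -> ~~ in_bounding_triangle (v k) (v k.+1) z.
Proof.
move=> origin_in sP _ _ _ _ nbP v0 step k v_neq0 v_clean z zP.
have [[_ [i [i_lt4 i_t ->]]] | [v_dirty _]] := step k v_neq0; last by [].
have v0P : v 0%N \in P by rewrite v0.
have vP := route_mem origin_in nbP v0P step k v_neq0.
exact: (greedy_bounding_triangle_empty origin_in nbP vP (v_neq0 k (leqnn k))
  v_clean i_lt4 i_t zP).
Qed.
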